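(* Let $k\ge 2$ and $n$ be positive integers. If $\mathcal{F}\subset\binom{[n]}{k}$ is an intersecting family satisfying $\binom{[n]}{k-1}\subset\mathcal{D}(\mathcal{F})$, then $n\le 3k-2$.
   Context: $[n]=\{1,\dots,n\}$; $\binom{S}{j}$ is the family of all $j$-element subsets of $S$. For a family $\mathcal{F}$ of sets, $\mathcal{D}(\mathcal{F})=\{F\setminus F' : F,F'\in\mathcal{F}\}$. A family is intersecting if any two of its members (not necessarily distinct) have nonempty intersection. *)

From mathcomp Require Import all_boot.
Set Implicit Arguments. Unset Strict Implicit. Unset Printing Implicit Defensive.

(* Ground set [n] is represented by 'I_n = {0,...,n-1}. *)

Definition diff_family (T : finType) (F : {set {set T}}) : {set {set T}} :=
  [set A :\: B | A in F, B in F].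

Definition intersecting (T : finType) (F : {set {set T}}) : Prop :=
  forall A B, A \in F -> B \in F -> A :&: B != set0.

(* Assume n >= 3k - 1, fix A in F and let S be its complement, so that
   |S| >= 2k - 1.  Every (k-1)-subset B of S is a difference X \ Y of members
   of F, hence B + c lies in F for some point c of A (X must meet A).  If two
   such sets B, B' are disjoint, B + c and B' + c' meet only if c = c'; and
   any two (k-1)-subsets of S whose union has at most k points are both
   disjoint from a third one, so they extend by the same point c.  Now write
   B = Q + p, take G in F disjoint from Q + c (it exists since Q + c is in
   D(F)); G meets A, so S \ G has at least k points and contains some
   B' = Q + t.  Then B' + c lies in F but misses G, contradicting that F is
   intersecting. *)
From mathcomp Require Import all_boot zify.

Lemma subset_of_card {T : finType} {X : {set T}} {m} :
  m <= #|X| -> exists2 Y : {set T}, Y \subset X & #|Y| = m.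
Proof.
case/card_geqP => s [uniq_s <- sX]; exists [set x in s].
  by apply/subsetP => x; rewrite inE => /sX.
by rewrite cardsE (card_uniqP uniq_s).
Qed.

Lemma diff_familyP {T : finType} {F : {set {set T}}} {B} :
  B \in diff_family F -> exists X Y, [/\ X \in F, Y \in F & B = X :\: Y].
Proof. by case/imset2P => X Y XF YF ->; exists X, Y. Qed.

Lemma diff_family_disjoint {T : finType} {F : {set {set T}}} {B} :
  B \in diff_family F -> exists2 G, G \in F & [disjoint B & G].
Proof.
case/diff_familyP => X [G [_ GF ->]]; exists G => //.
by rewrite -setI_eq0 setIDAC setDIl setDv setI0.
Qed.

Section DiffFamilyOfIntersecting.
Variables (T : finType) (k : nat) (F : {set {set T}}).
Hypotheses (k_gt1 : 2 <= k) (cardF : forall A, A \in F -> #|A| = k)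
  (F_int : intersecting F)
  (diffF : forall B : {set T}, #|B| = k.-1 -> B \in diff_family F).

Lemma card_setIC_le {A G : {set T}} :
  A \in F -> G \in F -> #|G :&: ~: A| <= k.-1.
Proof.
move=> AF GF; have /set0Pn[y] := F_int _ _ GF AF; rewrite inE => /andP[yG yA].
have sub : G :&: ~: A \subset G :\ y.
  apply/subsetP => z; rewrite !inE => /andP[zG zA]; rewrite zG andbT.
  by apply: contraNneq zA => ->.
by rewrite -(cardF _ GF) (cardsD1 y G) yG add1n; exact: subset_leq_card.
Qed.

Lemma extend_in_family {A B : {set T}} :
  A \in F -> B \subset ~: A -> #|B| = k.-1 -> exists2 c, c \in A & c |: B \in F.
Proof.
move=> AF sBA cardB; have [X [Y [XF _ defB]]] := diff_familyP (diffF _ cardB).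
have sBX : B \subset X by rewrite defB subsetDl.
have : 0 < #|X :\: B| by rewrite cardsDS // cardF //; lia.
case/card_gt0P => c; rewrite inE => /andP[cNB cX].
have defX : c |: B = X.
  by apply/eqP; rewrite eqEcard subUset sub1set cX sBX cardsU1 cNB cardF //; lia.
exists c; rewrite ?defX //.
have /set0Pn[x] := F_int _ _ XF AF; rewrite inE -defX in_setU1 => /andP[].
case/orP => [/eqP -> // | xB].
by move/subsetP: sBA => /(_ x xB); rewrite inE => /negPf->.
Qed.

Lemma extension_disjoint_eq {A B1 B2 : {set T}} {c1 c2} :
  B1 \subset ~: A -> B2 \subset ~: A -> [disjoint B1 & B2] ->
  c1 \in A -> c2 \in A -> c1 |: B1 \in F -> c2 |: B2 \in F -> c1 = c2.
Proof.
move=> /subsetP sB1 /subsetP sB2 dB c1A c2A F1 F2.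
have /set0Pn[x] := F_int _ _ F1 F2; rewrite inE !in_setU1.
case/andP => /orP[/eqP xc1 | x1] /orP[/eqP xc2 | x2].
- by rewrite -xc1 -xc2.
- by have := sB2 x x2; rewrite inE xc1 c1A.
- by have := sB1 x x1; rewrite inE xc2 c2A.
- by rewrite (disjointFr dB x1) in x2.
Qed.

Lemma extension_eq {A B1 B2 : {set T}} {c1 c2} :
  A \in F -> 3 * k - 2 < #|T| ->
  B1 \subset ~: A -> B2 \subset ~: A -> #|B1 :|: B2| <= k ->
  c1 \in A -> c2 \in A -> c1 |: B1 \in F -> c2 |: B2 \in F -> c1 = c2.
Proof.
move=> AF cardT sB1 sB2 cardU c1A c2A F1 F2.
have cardS : #|~: A| = #|T| - k by rewrite cardsCs setCK (cardF _ AF).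
have : k.-1 <= #|~: A :\: (B1 :|: B2)|.
  rewrite cardsD cardS.
  by have := subset_leq_card (subsetIr (~: A) (B1 :|: B2)); lia.
case/subset_of_card => B0 sB0 cardB0.
have sB0A : B0 \subset ~: A := subset_trans sB0 (subsetDl _ _).
have dB0 : [disjoint B0 & B1 :|: B2].
  rewrite disjoint_subset (subset_trans sB0) //.
  by apply/subsetP => z; rewrite !inE => /andP[].
have [c0 c0A F0] := extend_in_family AF sB0A cardB0.
have d1 := disjointWr (subsetUl B1 B2) dB0.
have d2 := disjointWr (subsetUr B1 B2) dB0.
rewrite -(extension_disjoint_eq sB0A sB1 d1 c0A c1A F0 F1).
exact: extension_disjoint_eq sB0A sB2 d2 c0A c2A F0 F2.
Qed.

Lemma exists_neighbour_avoiding {A B : {set T}} {c} :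
  A \in F -> 3 * k - 2 < #|T| -> B \subset ~: A -> #|B| = k.-1 -> c \in A ->
  exists G : {set T}, exists2 B' : {set T},
    [/\ G \in F, c \notin G, B' \subset ~: A :\: G & #|B'| = k.-1]
    & #|B :|: B'| <= k.
Proof.
move=> AF cardT sBA cardB cA.
have cardS : #|~: A| = #|T| - k by rewrite cardsCs setCK (cardF _ AF).
have : 0 < #|B| by lia.
case/card_gt0P => p pB; set Q := B :\ p.
have cardQ : #|Q|.+1 = k.-1 by rewrite -cardB (cardsD1 p B) pB.
have sQA : Q \subset ~: A := subset_trans (subsetDl B [set p]) sBA.
have cNQ : c \notin Q by apply: contraL cA => /(subsetP sQA); rewrite inE.
have : #|c |: Q| = k.-1 by rewrite cardsU1 cNQ add1n.
case/diffF/diff_family_disjoint => G GF dG; exists G.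
have cNG : c \notin G by rewrite (disjointFr dG (setU11 c Q)).
have dQG : [disjoint Q & G] := disjointWl (subsetU1 c Q) dG.
have sQR : Q \subset ~: A :\: G.
  by apply/subsetP => z zQ; rewrite inE (disjointFr dQG zQ) (subsetP sQA).
have : 0 < #|(~: A :\: G) :\: Q|.
  rewrite cardsDS // cardsD cardS setIC.
  by move: (card_setIC_le AF GF) cardQ cardT; clear -k_gt1; lia.
case/card_gt0P => t /setDP[tR tNQ]; exists (t |: Q).
  split=> //; first by rewrite subUset sub1set tR.
  by rewrite cardsU1 tNQ add1n.
have /subset_leq_card/leq_trans-> // : B :|: (t |: Q) \subset t |: B.
  by rewrite subUset subsetUr setUS // subsetDl.
rewrite cardsU1 cardB; apply: leq_trans (leq_add (leq_b1 _) (leqnn k.-1)) _.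
by rewrite add1n prednK // ltnW.
Qed.

Lemma card_le_diff_family_intersecting : #|T| <= 3 * k - 2.
Proof.
rewrite leqNgt; apply/negP => cardT.
have : k.-1 <= #|[set: T]| by rewrite cardsT; lia.
case/subset_of_card => B0 _ /diffF/diff_familyP[A [_ [AF _ _]]].
have : k.-1 <= #|~: A| by rewrite cardsCs setCK (cardF _ AF); lia.
case/subset_of_card => B sBA cardB.
have [c cA cBF] := extend_in_family AF sBA cardB.
have [G [B' [GF cNG sB'R cardB'] cardU]] :=
  exists_neighbour_avoiding AF cardT sBA cardB cA.
have sB'A : B' \subset ~: A := subset_trans sB'R (subsetDl _ _).
have [c' c'A c'F] := extend_in_family AF sB'A cardB'.
have c_eq := extension_eq AF cardT sBA sB'A cardU cA c'A cBF c'F.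
rewrite -{}c_eq in c'F.
have /set0Pn[x] := F_int _ _ c'F GF; rewrite inE in_setU1.
case/andP => /orP[/eqP-> | /(subsetP sB'R)]; first by rewrite (negPf cNG).
by rewrite inE => /andP[/negPf->].
Qed.

End DiffFamilyOfIntersecting.

Theorem theorem2 (n k : nat) (F : {set {set 'I_n}}) :
  2 <= k -> 0 < n ->
  (forall A, A \in F -> #|A| = k) ->
  intersecting F ->
  (forall B : {set 'I_n}, #|B| = k.-1 -> B \in diff_family F) ->
  n <= 3 * k - 2.
Proof.
move=> k_gt1 _ cardF F_int diffF; rewrite -[n]card_ord.
exact: card_le_diff_family_intersecting k_gt1 cardF F_int diffF.
Qed.
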